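(* $\mathrm{CLC}_0$ has the unique normal form property: if $t_1$ and $t_2$ are in $\mathrm{CLC}_0$-normal form and $t_1=_{\mathrm{CLC}_0}t_2$, then $t_1\equiv t_2$.
   Context: Terms are built from variables and the constants $C,T,F,K,S$ by binary application (left-associative); $\equiv$ is syntactic identity. $\mathrm{CLC}_0$ is the term rewriting system with rules $C\,T\,x\,y\to x$; $C\,F\,x\,y\to y$; $C\,z\,x\,x\to x$; $K\,x\,y\to x$; $S\,x\,y\,z\to x\,z\,(y\,z)$, rewriting closed under contexts; $=_{\mathrm{CLC}_0}$ is its conversion relation and a normal form is a term containing no redex. *)

From Stdlib Require Import Relations.

Inductive term : Type :=
| Var : nat -> term
| Cc : term
| Ct : term
| Cf : term
| Ck : term
| Cs : term
| App : term -> term -> term.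

Inductive rule : term -> term -> Prop :=
| r_CT : forall x y, rule (App (App (App Cc Ct) x) y) x
| r_CF : forall x y, rule (App (App (App Cc Cf) x) y) y
| r_Cxx : forall z x, rule (App (App (App Cc z) x) x) x
| r_K : forall x y, rule (App (App Ck x) y) x
| r_S : forall x y z, rule (App (App (App Cs x) y) z) (App (App x z) (App y z)).

Inductive step : term -> term -> Prop :=
| st_root : forall s t, rule s t -> step s t
| st_appl : forall s s' t, step s s' -> step (App s t) (App s' t)
| st_appr : forall s t t', step t t' -> step (App s t) (App s t').

Definition conv : term -> term -> Prop := clos_refl_sym_trans term step.

Definition normal_form (t : term) : Prop := forall t', ~ step t t'.

(* The non-left-linear rule  C z x x -> x  destroys confluence of the plain
   rewriting relation, so we argue through a conditional parallel reduction
   [par] whose C-contractions are guarded by *conversion* side conditions: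
   contract  C z x y  to the first branch when z = T, to the second when
   z = F, and to x when x = y while z is convertible to neither T nor F.
   1. Consistency: T and F are not convertible.  This is shown in a graph
      model (sets of tokens, application as in Engeler/Plotkin models) in
      which every rule is sound and T, F denote different sets.
   2. Using consistency, [par] satisfies the triangle property with respect
      to a (classically defined) complete development [dev], hence its
      reflexive-transitive closure is confluent; as conversion is contained
      in the equivalence generated by [par], convertible terms are joinable.
   3. A term in normal form is [par]-normal (by induction on the term, the
      side conditions of a C-contraction being settled by 2 on the normal
      subterms), so two convertible normal forms have a common reduct equal
      to both of them. *)

From Stdlib Require Import Relations List ClassicalEpsilon.
Import ListNotations.

(* * 1. A graph model and the consistency of CLC_0 *)

(* Tokens: atoms, and arrows [arr l m] read as "from the finite
   information l, produce m". *)
Inductive token : Type :=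
| atom (n : nat)
| arr (l : list token) (m : token).

Definition tset := token -> Prop.

Definition all_in (l : list token) (X : tset) : Prop := forall a, In a l -> X a.
Definition set_of_list (l : list token) : tset := fun a => In a l.
Definition set_eq (X Y : tset) : Prop := forall m, X m <-> Y m.
Definition set_incl (X Y : tset) : Prop := forall m, X m -> Y m.

Definition apply_set (X Y : tset) : tset :=
  fun m => exists l, all_in l Y /\ X (arr l m).

Lemma all_in_nil (X : tset) : all_in [] X.
Proof. intros a []. Qed.

Lemma all_in_singleton (X : tset) (a : token) : X a -> all_in [a] X.
Proof. intros Ha b [<- | []]; exact Ha. Qed.

Lemma all_in_app (l1 l2 : list token) (X : tset) :
  all_in l1 X -> all_in l2 X -> all_in (l1 ++ l2) X.
Proof. intros H1 H2 a Ha; apply in_app_or in Ha as [Ha | Ha]; auto. Qed.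

Lemma apply_set_mono (X X' Y Y' : tset) :
  set_incl X X' -> set_incl Y Y' -> set_incl (apply_set X Y) (apply_set X' Y').
Proof. intros HX HY m [l [Hl Hm]]. exists l. split; auto. intros a Ha; auto. Qed.

Lemma apply_set_proper (X X' Y Y' : tset) :
  set_eq X X' -> set_eq Y Y' -> set_eq (apply_set X Y) (apply_set X' Y').
Proof. intros HX HY m; split; apply apply_set_mono; intros a; firstorder. Qed.

Lemma apply_set_of_list_weaken (l1 l1' l2 l2' : list token) :
  incl l1 l1' -> incl l2 l2' ->
  set_incl (apply_set (set_of_list l1) (set_of_list l2))
           (apply_set (set_of_list l1') (set_of_list l2')).
Proof. intros H1 H2; apply apply_set_mono; [exact H1 | exact H2]. Qed.

Lemma apply_set3 (G X Y Z : tset) (m : token) :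
  apply_set (apply_set (apply_set G X) Y) Z m <->
  exists l3 l2 l1, all_in l3 Z /\ all_in l2 Y /\ all_in l1 X /\
                   G (arr l1 (arr l2 (arr l3 m))).
Proof.
  unfold apply_set; split.
  - intros [l3 [H3 [l2 [H2 [l1 [H1 HG]]]]]]. eauto 10.
  - intros [l3 [l2 [l1 [H3 [H2 [H1 HG]]]]]]. eauto 10.
Qed.

(* Interpretation of the constants: T = {0}, F = {1}; K selects its first
   argument; C z x y = (x ∩ y) ∪ (x if 0 ∈ z) ∪ (y if 1 ∈ z); S is the
   graph of  x z (y z). *)
Definition T_set : tset := fun t => t = atom 0.
Definition F_set : tset := fun t => t = atom 1.

Definition K_set : tset :=
  fun t => exists l1 l2 m, t = arr l1 (arr l2 m) /\ In m l1.

Definition C_set : tset :=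
  fun t => exists l1 l2 l3 m, t = arr l1 (arr l2 (arr l3 m)) /\
    ((In m l2 /\ In m l3) \/ (In m l2 /\ In (atom 0) l1) \/
     (In m l3 /\ In (atom 1) l1)).

Definition S_set : tset :=
  fun t => exists l1 l2 l3 m, t = arr l1 (arr l2 (arr l3 m)) /\
    apply_set (apply_set (set_of_list l1) (set_of_list l3))
              (apply_set (set_of_list l2) (set_of_list l3)) m.

Lemma K_set_sound (X Y : tset) : set_eq (apply_set (apply_set K_set X) Y) X.
Proof.
  intro m; unfold apply_set; split.
  - intros [l2 [_ [l1 [H1 [l1' [l2' [m' [E Hm]]]]]]]].
    injection E as -> -> ->. auto.
  - intros Hm. exists []. split; [apply all_in_nil |].
    exists [m]. split; [now apply all_in_singleton |].
    exists [m], [], m. simpl; auto.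
Qed.

Lemma C_set_apply3 (Z X Y : tset) (m : token) :
  apply_set (apply_set (apply_set C_set Z) X) Y m <->
  exists l3 l2 l1, all_in l3 Y /\ all_in l2 X /\ all_in l1 Z /\
    ((In m l2 /\ In m l3) \/ (In m l2 /\ In (atom 0) l1) \/
     (In m l3 /\ In (atom 1) l1)).
Proof.
  rewrite apply_set3. split.
  - intros [l3 [l2 [l1 [H3 [H2 [H1 [a [b [c [d [E H]]]]]]]]]]].
    injection E as -> -> -> ->. eauto 10.
  - intros [l3 [l2 [l1 [H3 [H2 [H1 H]]]]]].
    exists l3, l2, l1. repeat split; auto. exists l1, l2, l3, m; auto.
Qed.

Lemma CT_set_sound (X Y : tset) :
  set_eq (apply_set (apply_set (apply_set C_set T_set) X) Y) X.
Proof.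
  intro m; rewrite C_set_apply3; split.
  - intros [l3 [l2 [l1 [H3 [H2 [H1 [[A B] | [[A B] | [A B]]]]]]]]]; auto.
    apply H1 in B. discriminate B.
  - intros Hm. exists [], [m], [atom 0].
    split; [apply all_in_nil |]. split; [now apply all_in_singleton |].
    split; [now apply all_in_singleton |]. simpl; auto.
Qed.

Lemma CF_set_sound (X Y : tset) :
  set_eq (apply_set (apply_set (apply_set C_set F_set) X) Y) Y.
Proof.
  intro m; rewrite C_set_apply3; split.
  - intros [l3 [l2 [l1 [H3 [H2 [H1 [[A B] | [[A B] | [A B]]]]]]]]]; auto.
    apply H1 in B. discriminate B.
  - intros Hm. exists [m], [], [atom 1].
    split; [now apply all_in_singleton |]. split; [apply all_in_nil |].
    split; [now apply all_in_singleton |]. simpl; auto.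
Qed.

Lemma Cxx_set_sound (Z X : tset) :
  set_eq (apply_set (apply_set (apply_set C_set Z) X) X) X.
Proof.
  intro m; rewrite C_set_apply3; split.
  - intros [l3 [l2 [l1 [H3 [H2 [H1 [[A B] | [[A B] | [A B]]]]]]]]]; auto.
  - intros Hm. exists [m], [m], [].
    split; [now apply all_in_singleton |]. split; [now apply all_in_singleton |].
    split; [apply all_in_nil |]. simpl; auto.
Qed.

(* Continuity: finitely many tokens of  Y Z  are already produced by finite
   parts of Y and Z.  This is what makes S sound. *)
Lemma apply_set_finite_support (Y Z : tset) (e : list token) :
  all_in e (apply_set Y Z) ->
  exists l2 l3, all_in l2 Y /\ all_in l3 Z /\
                all_in e (apply_set (set_of_list l2) (set_of_list l3)).
Proof.
  induction e as [| a e IH]; intros He.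
  - exists [], []. repeat split; apply all_in_nil.
  - destruct IH as [l2 [l3 [H2 [H3 He']]]]; [intros x Hx; apply He; simpl; auto |].
    destruct (He a (or_introl eq_refl)) as [la [Hla Ha]].
    exists (arr la a :: l2), (la ++ l3). repeat split.
    + intros x [<- | Hx]; auto.
    + now apply all_in_app.
    + intros x [<- | Hx].
      * exists la. split; [intros b Hb; apply in_or_app; auto | left; auto].
      * apply (apply_set_of_list_weaken l2 _ l3 _ (incl_tl _ (incl_refl l2))
                 (incl_appr la (incl_refl l3))).
        exact (He' x Hx).
Qed.

Lemma S_set_sound (X Y Z : tset) :
  set_eq (apply_set (apply_set (apply_set S_set X) Y) Z)
         (apply_set (apply_set X Z) (apply_set Y Z)).
Proof.
  intro m; rewrite apply_set3; split.
  - intros [l3 [l2 [l1 [H3 [H2 [H1 [a [b [c [d [E H]]]]]]]]]]].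
    injection E as -> -> -> ->.
    revert H; apply apply_set_mono; apply apply_set_mono; intros u Hu; auto.
  - intros [e [He [l [Hl Hx]]]].
    destruct (apply_set_finite_support _ _ _ He) as [l2 [l3 [H2 [H3 He']]]].
    exists (l ++ l3), l2, [arr l (arr e m)].
    split; [now apply all_in_app |]. split; [exact H2 |].
    split; [now apply all_in_singleton |].
    exists [arr l (arr e m)], l2, (l ++ l3), m. split; [reflexivity |].
    exists e. split.
    + intros u Hu.
      apply (apply_set_of_list_weaken l2 _ l3 _ (incl_refl l2)
               (incl_appr l (incl_refl l3))).
      exact (He' u Hu).
    + exists l. split; [intros b Hb; apply in_or_app; auto | left; reflexivity].
Qed.

Fixpoint denote (rho : nat -> tset) (t : term) : tset :=
  match t with
  | Var n => rho n
  | Cc => C_set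
  | Ct => T_set
  | Cf => F_set
  | Ck => K_set
  | Cs => S_set
  | App a b => apply_set (denote rho a) (denote rho b)
  end.

Lemma step_denote (rho : nat -> tset) (s t : term) :
  step s t -> set_eq (denote rho s) (denote rho t).
Proof.
  induction 1 as [s t Hr | s s' t _ IH | s t t' _ IH].
  - destruct Hr; simpl.
    + apply CT_set_sound.
    + apply CF_set_sound.
    + apply Cxx_set_sound.
    + apply K_set_sound.
    + apply S_set_sound.
  - simpl. apply apply_set_proper; [exact IH | intro; tauto].
  - simpl. apply apply_set_proper; [intro; tauto | exact IH].
Qed.

Lemma conv_denote (rho : nat -> tset) (s t : term) :
  conv s t -> set_eq (denote rho s) (denote rho t).
Proof.
  induction 1 as [s t H | s | s t _ IH | s t u _ IH1 _ IH2].
  - now apply step_denote.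
  - intro; tauto.
  - intro m; specialize (IH m); tauto.
  - intro m; specialize (IH1 m); specialize (IH2 m); tauto.
Qed.

(* Consistency: T and F are not convertible, since they denote {0} and {1}. *)
Lemma T_not_conv_F : ~ conv Ct Cf.
Proof.
  intro H. apply (conv_denote (fun _ _ => False)) in H.
  assert (E : atom 0 = atom 1) by (apply (H (atom 0)); reflexivity).
  discriminate E.
Qed.

Lemma conv_app (a a' b b' : term) :
  conv a a' -> conv b b' -> conv (App a b) (App a' b').
Proof.
  intros Ha Hb. apply rst_trans with (App a' b).
  - induction Ha; [apply rst_step, st_appl; auto | apply rst_refl
                   | now apply rst_sym | eapply rst_trans; eauto].
  - induction Hb; [apply rst_step, st_appr; auto | apply rst_refl
                   | now apply rst_sym | eapply rst_trans; eauto].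
Qed.

Lemma conv_rule (s t : term) : rule s t -> conv s t.
Proof. intros H; apply rst_step, st_root, H. Qed.

Lemma conv_C_test (z z' x y : term) :
  conv z z' -> conv (App (App (App Cc z) x) y) (App (App (App Cc z') x) y).
Proof. intros Hz. repeat apply conv_app; try apply rst_refl; exact Hz. Qed.

(* * 3. Conditional parallel reduction and its confluence *)

Definition atomic (t : term) : Prop := match t with App _ _ => False | _ => True end.

(* Parallel reduction in which a C-redex is contracted according to the
   conversion class of its arguments; the three C-cases are mutually
   exclusive because T and F are not convertible. *)
Inductive par : term -> term -> Prop :=
| p_atom : forall t, atomic t -> par t t
| p_app : forall a a' b b', par a a' -> par b b' -> par (App a b) (App a' b')
| p_K : forall x x' y, par x x' -> par (App (App Ck x) y) x'
| p_S : forall x x' y y' z z', par x x' -> par y y' -> par z z' ->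
    par (App (App (App Cs x) y) z) (App (App x' z') (App y' z'))
| p_C1 : forall z x x' y, conv z Ct -> par x x' -> par (App (App (App Cc z) x) y) x'
| p_C2 : forall z x y y', conv z Cf -> par y y' -> par (App (App (App Cc z) x) y) y'
| p_C3 : forall z x x' y, conv x y -> ~ conv z Ct -> ~ conv z Cf -> par x x' ->
    par (App (App (App Cc z) x) y) x'.

Lemma par_refl (t : term) : par t t.
Proof. induction t; try (apply p_atom; exact I). now apply p_app. Qed.

(* Decidability of conversion, by classical choice: [dev] needs it. *)
Definition conv_dec (s t : term) : {conv s t} + {~ conv s t} :=
  excluded_middle_informative (conv s t).

Lemma step_par (s t : term) : step s t -> par s t.
Proof.
  induction 1 as [s t Hr | s s' t _ IH | s t t' _ IH].
  - destruct Hr as [x y | x y | z x | x y | x y z].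
    + apply p_C1; [apply rst_refl | apply par_refl].
    + apply p_C2; [apply rst_refl | apply par_refl].
    + destruct (conv_dec z Ct); [apply p_C1; auto; apply par_refl |].
      destruct (conv_dec z Cf); [apply p_C2; auto; apply par_refl |].
      apply p_C3; auto; [apply rst_refl | apply par_refl].
    + apply p_K, par_refl.
    + apply p_S; apply par_refl.
  - apply p_app; [exact IH | apply par_refl].
  - apply p_app; [apply par_refl | exact IH].
Qed.

Lemma par_conv (s t : term) : par s t -> conv s t.
Proof.
  induction 1 as [t _ | | x x' y _ IH | x x' y y' z z' _ IHx _ IHy _ IHz
                 | z x x' y Hz _ IH | z x y y' Hz _ IH | z x x' y Hxy _ _ _ IH].
  - apply rst_refl.
  - now apply conv_app.
  - eapply rst_trans; [apply conv_rule, r_K | exact IH].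
  - eapply rst_trans; [apply conv_rule, r_S | now repeat apply conv_app].
  - eapply rst_trans; [apply conv_C_test, Hz |].
    eapply rst_trans; [apply conv_rule, r_CT | exact IH].
  - eapply rst_trans; [apply conv_C_test, Hz |].
    eapply rst_trans; [apply conv_rule, r_CF | exact IH].
  - eapply rst_trans; [apply conv_app; [apply rst_refl | apply rst_sym, Hxy] |].
    eapply rst_trans; [apply conv_rule, r_Cxx | exact IH].
Qed.

Definition dev_C (z x y dz dx dy : term) : term :=
  if conv_dec z Ct then dx
  else if conv_dec z Cf then dy
  else if conv_dec x y then dx
  else App (App (App Cc dz) dx) dy.

Fixpoint dev (t : term) : term :=
  match t with
  | App (App Ck x) y => dev x
  | App (App (App Cs x) y) z => App (App (dev x) (dev z)) (App (dev y) (dev z))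
  | App (App (App Cc z) x) y => dev_C z x y (dev z) (dev x) (dev y)
  | App a b => App (dev a) (dev b)
  | t => t
  end.

Lemma dev_C_T (z x y dz dx dy : term) : conv z Ct -> dev_C z x y dz dx dy = dx.
Proof. intros Hz; unfold dev_C; now destruct (conv_dec z Ct). Qed.

(* This is where consistency is needed: z cannot be both T and F. *)
Lemma dev_C_F (z x y dz dx dy : term) : conv z Cf -> dev_C z x y dz dx dy = dy.
Proof.
  intros Hz; unfold dev_C. destruct (conv_dec z Ct) as [HT | _].
  - exfalso; apply T_not_conv_F. eapply rst_trans; [apply rst_sym, HT | exact Hz].
  - now destruct (conv_dec z Cf).
Qed.

Lemma dev_C_eq (z x y dz dx dy : term) :
  conv x y -> ~ conv z Ct -> ~ conv z Cf -> dev_C z x y dz dx dy = dx.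
Proof.
  intros Hxy HT HF; unfold dev_C.
  destruct (conv_dec z Ct); [contradiction |].
  destruct (conv_dec z Cf); [contradiction |].
  now destruct (conv_dec x y).
Qed.

Lemma par_atomic (c t : term) : atomic c -> par c t -> t = c.
Proof. intros Hc H; inversion H; subst; simpl in Hc; tauto. Qed.

Lemma par_atomic_app_inv (c a t : term) :
  atomic c -> par (App c a) t -> exists a', t = App c a' /\ par a a'.
Proof.
  intros Hc H; inversion H as [u Hu | c0 c' a0 a' Hc' Ha | | | | |]; subst;
    try contradiction.
  apply par_atomic in Hc'; [subst; eauto | exact Hc].
Qed.

Lemma par_atomic_app2_inv (c a b t : term) :
  atomic c -> c <> Ck -> par (App (App c a) b) t ->
  exists a' b', t = App (App c a') b' /\ par a a' /\ par b b'.
Proof.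
  intros Hc Hk H; inversion H as [u Hu | ca ca' b0 b' Hca Hb | | | | |]; subst;
    try contradiction; try congruence.
  apply par_atomic_app_inv in Hca as [a' [-> Ha]]; eauto.
Qed.

Lemma par_dev_C (z x y z' x' y' : term) :
  par z z' -> par x x' -> par y y' ->
  par z' (dev z) -> par x' (dev x) -> par y' (dev y) ->
  par (App (App (App Cc z') x') y') (dev_C z x y (dev z) (dev x) (dev y)).
Proof.
  intros Hz Hx Hy Hz' Hx' Hy'.
  apply par_conv in Hz; apply par_conv in Hx; apply par_conv in Hy.
  unfold dev_C.
  destruct (conv_dec z Ct) as [HT | HT].
  { apply p_C1; [eapply rst_trans; [apply rst_sym, Hz | exact HT] | exact Hx']. }
  destruct (conv_dec z Cf) as [HF | HF].
  { apply p_C2; [eapply rst_trans; [apply rst_sym, Hz | exact HF] | exact Hy']. }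
  destruct (conv_dec x y) as [Hxy | Hxy].
  - apply p_C3; [| intro H; apply HT | intro H; apply HF | exact Hx'].
    + eapply rst_trans; [apply rst_sym, Hx | eapply rst_trans; [exact Hxy | exact Hy]].
    + eapply rst_trans; [exact Hz | exact H].
    + eapply rst_trans; [exact Hz | exact H].
  - repeat apply p_app; auto. apply p_atom; exact I.
Qed.

Lemma par_dev (s t : term) : par s t -> par t (dev s).
Proof.
  induction 1 as [t Ht | a a' b b' Ha IHa Hb IHb | x x' y _ IH
                 | x x' y y' z z' _ IHx _ IHy _ IHz
                 | z x x' y Hz _ IH | z x y y' Hz _ IH | z x x' y Hxy HT HF _ IH].
  - destruct t; try contradiction; apply p_atom; exact I.
  - destruct a as [| | | | | | a1 a2]; try (simpl; apply p_app; assumption).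
    destruct a1 as [| | | | | | a11 a12]; try (simpl in *; apply p_app; assumption).
    + (* K x b *)
      apply par_atomic_app_inv in Ha as [x' [-> Hx]]; [| exact I].
      apply par_atomic_app_inv in IHa as [dx [E Hdx]]; [| exact I].
      injection E as <-. simpl. now apply p_K.
    + destruct a11 as [| | | | | | a111 a112];
        try (simpl in *; apply p_app; assumption).
      * (* C z x b *)
        apply par_atomic_app2_inv in Ha as [z' [x' [-> [Hz Hx]]]];
          [| exact I | discriminate].
        apply par_atomic_app2_inv in IHa as [dz [dx [E [Hdz Hdx]]]];
          [| exact I | discriminate].
        injection E as <- <-. simpl. now apply par_dev_C.
      * (* S x z b *)
        apply par_atomic_app2_inv in Ha as [x' [y' [-> [Hx Hy]]]];
          [| exact I | discriminate].
        apply par_atomic_app2_inv in IHa as [dx [dy [E [Hdx Hdy]]]];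
          [| exact I | discriminate].
        injection E as <- <-. simpl. now apply p_S.
  - exact IH.
  - simpl. now repeat apply p_app.
  - simpl. now rewrite dev_C_T.
  - simpl. now rewrite dev_C_F.
  - simpl. now rewrite dev_C_eq.
Qed.

Local Notation par_star := (clos_refl_trans_1n term par).

Lemma par_star_trans (s t u : term) : par_star s t -> par_star t u -> par_star s u.
Proof.
  intros H1 H2. apply clos_rt_rt1n.
  eapply rt_trans; apply clos_rt1n_rt; eassumption.
Qed.

Lemma par_strip (s t u : term) :
  par s t -> par_star s u -> exists v, par_star t v /\ par u v.
Proof.
  intros Hst Hsu. revert t Hst.
  induction Hsu as [s | s s1 u Hs1 _ IH]; intros t Hst.
  - exists t. split; [apply rt1n_refl | exact Hst].
  - destruct (IH (dev s)) as [v [Hv Huv]]; [now apply par_dev |].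
    exists v. split; [| exact Huv].
    eapply Relation_Operators.rt1n_trans; [apply par_dev, Hst | exact Hv].
Qed.

Lemma par_star_confluent (s t u : term) :
  par_star s t -> par_star s u -> exists v, par_star t v /\ par_star u v.
Proof.
  intros Hst. revert u.
  induction Hst as [s | s s1 t Hs1 _ IH]; intros u Hsu.
  - exists u. split; [exact Hsu | apply rt1n_refl].
  - destruct (par_strip _ _ _ Hs1 Hsu) as [v1 [Hs1v1 Huv1]].
    destruct (IH _ Hs1v1) as [v [Htv Hv1v]].
    exists v. split; [exact Htv | eapply Relation_Operators.rt1n_trans; eassumption].
Qed.

Lemma conv_joinable (s t : term) :
  conv s t -> exists v, par_star s v /\ par_star t v.
Proof.
  induction 1 as [s t H | s | s t _ IH | s t u _ IH1 _ IH2].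
  - exists t. split; [apply clos_rt1n_step, step_par, H | apply rt1n_refl].
  - exists s. split; apply rt1n_refl.
  - destruct IH as [v [A B]]. eauto.
  - destruct IH1 as [v1 [A B]]. destruct IH2 as [v2 [C D]].
    destruct (par_star_confluent _ _ _ B C) as [w [E F]].
    exists w. split; eapply par_star_trans; eassumption.
Qed.

(* * 4. Normal forms *)

Definition par_normal (t : term) : Prop := forall u, par t u -> u = t.

Lemma par_normal_star (s v : term) : par_normal s -> par_star s v -> v = s.
Proof.
  intros Hs H. induction H as [| s s1 v Hs1 _ IH]; [reflexivity |].
  apply Hs in Hs1. subst s1. now apply IH.
Qed.

Lemma par_normal_conv_eq (s t : term) :
  par_normal s -> par_normal t -> conv s t -> s = t.
Proof.
  intros Hs Ht H. destruct (conv_joinable _ _ H) as [v [A B]].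
  apply par_normal_star in A; [| exact Hs]. apply par_normal_star in B; [| exact Ht].
  congruence.
Qed.

Lemma par_normal_atomic (c : term) : atomic c -> par_normal c.
Proof. intros Hc u H. now apply par_atomic in H. Qed.

Lemma par_normal_app (a b : term) : par_normal (App a b) -> par_normal a /\ par_normal b.
Proof.
  intros H; split; intros u Hu.
  - assert (E := H _ (p_app _ _ _ _ Hu (par_refl b))). congruence.
  - assert (E := H _ (p_app _ _ _ _ (par_refl a) Hu)). congruence.
Qed.

Lemma normal_form_app (a b : term) :
  normal_form (App a b) -> normal_form a /\ normal_form b.
Proof.
  intros N; split; intros u H.
  - apply (N (App u b)), st_appl, H.
  - apply (N (App a u)), st_appr, H.
Qed.

(* A normal form admits no proper parallel reduction: the side condition
   of a C-contraction would force, by [par_normal_conv_eq] applied to its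
   (inductively parallel-normal) arguments, a syntactic redex. *)
Lemma normal_form_par_normal (t : term) : normal_form t -> par_normal t.
Proof.
  induction t as [| | | | | | t1 IH1 t2 IH2]; intros N;
    try (apply par_normal_atomic; exact I).
  destruct (normal_form_app _ _ N) as [N1 N2].
  specialize (IH1 N1); specialize (IH2 N2).
  intros u H; inversion H as [| a a' b b' Ha Hb | | | z x x' y Hz | z x y y' Hz
                              | z x x' y Hxy]; subst; try contradiction.
  - now rewrite (IH1 _ Ha), (IH2 _ Hb).
  - exfalso; eapply N; apply st_root, r_K.
  - exfalso; eapply N; apply st_root, r_S.
  - apply par_normal_app in IH1 as [Hcz _]; apply par_normal_app in Hcz as [_ Pz].
    apply par_normal_conv_eq in Hz; [subst | exact Pz | now apply par_normal_atomic].
    exfalso; eapply N; apply st_root, r_CT.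
  - apply par_normal_app in IH1 as [Hcz _]; apply par_normal_app in Hcz as [_ Pz].
    apply par_normal_conv_eq in Hz; [subst | exact Pz | now apply par_normal_atomic].
    exfalso; eapply N; apply st_root, r_CF.
  - apply par_normal_app in IH1 as [_ Px].
    apply par_normal_conv_eq in Hxy; [subst | exact Px | exact IH2].
    exfalso; eapply N; apply st_root, r_Cxx.
Qed.

Theorem mainTheorem7 : forall t1 t2 : term,
  normal_form t1 -> normal_form t2 -> conv t1 t2 -> t1 = t2.
Proof.
  intros t1 t2 N1 N2 H.
  apply par_normal_conv_eq; [now apply normal_form_par_normal .. | exact H].
Qed.
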